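(* Let $R$ be a UFD of characteristic $p>0$, $R[x,y]$ the polynomial ring in two variables, $0\ne a\in R$, $0\ne\theta(y)=\sum_{i\ge1}s_iy^i\in yR[y]$, $f:=ax+\theta(y)$, and $0\ne F\in R[f]$. Let $\phi\in\operatorname{Aut}_RR[x,y]$ be given by $\phi(y)=y+aF$ and $\phi(x)=x+a^{-1}(\theta(y)-\theta(y+aF))$. Let $d:=\gcd(a,\theta'(y))\in R$, $b:=a/d$, $\theta^*(y):=\sum_{i\ge1}s_{pi}y^i$, $q:=y^p-(aF)^{p-1}y$ and $q_1:=d^{-1}(f-\theta^*(q))$. Then $R[x,y]^{\phi}=R_b[q_1,q]\cap R[x,y]$, where $R_b:=R[b^{-1}]$ and the intersection is taken in $R_a[x,y]$.
   Context: $\theta'(y)$ is the formal derivative; $d$ is a greatest common divisor in $R[y]$ of $a$ and $\theta'(y)$, which may be taken in $R$ (if $\theta'(y)=0$, $d=a$). $R[x,y]^{\phi}:=\{u\mid\phi(u)=u\}$. $R_a:=R[a^{-1}]$. The element $q_1$ lies in $R[x,y]$ and in $R[x,y]^{\phi}$. *)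

From HB Require Import structures.
From mathcomp Require Import all_boot all_order all_algebra.
Set Implicit Arguments. Unset Strict Implicit. Unset Printing Implicit Defensive.
Import Order.TTheory GRing.Theory Num.Theory.
Local Open Scope ring_scope.

Definition dvdr {R : comNzRingType} (x y : R) : Prop := exists c : R, y = c * x.
Definition assocr {R : comUnitRingType} (x y : R) : Prop :=
  exists2 u : R, u \is a GRing.unit & x = u * y.

Definition irreducible_elt {R : idomainType} (p : R) : Prop :=
  p != 0 /\ p \isn't a GRing.unit /\
  forall x y : R, p = x * y -> x \is a GRing.unit \/ y \is a GRing.unit.

Definition is_UFD (R : idomainType) : Prop :=
  (forall x : R, x != 0 -> x \isn't a GRing.unit ->
     exists s : seq R, (forall p, p \in s -> irreducible_elt p) /\ x = \prod_(p <- s) p)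
  /\
  (forall s t : seq R,
     (forall p, p \in s -> irreducible_elt p) ->
     (forall p, p \in t -> irreducible_elt p) ->
     assocr (\prod_(p <- s) p) (\prod_(p <- t) p) ->
     exists t' : seq R, perm_eq t t' /\ size s = size t' /\
       forall i, (i < size s)%N -> assocr (nth 0 s i) (nth 0 t' i)).

Definition is_gcd {R : comNzRingType} (d x y : R) : Prop :=
  dvdr d x /\ dvdr d y /\ (forall g : R, dvdr g x -> dvdr g y -> dvdr g d).

(* Bivariate polynomials R[x,y] are represented as {poly {poly R}}:
   the outer variable is y, the inner variable is x. *)
Definition varx {R : nzRingType} : {poly {poly R}} := ('X)%:P.
Definition vary {R : nzRingType} : {poly {poly R}} := 'X.
Definition cst2 {R : nzRingType} (r : R) : {poly {poly R}} := r%:P%:P.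

Definition eval2 {R : comNzRingType} (u : {poly {poly R}}) (X Y : {poly {poly R}})
  : {poly {poly R}} :=
  (map_poly (fun c : {poly R} => (map_poly (@cst2 R) c).[X]) u).[Y].

Definition evalP {R : comNzRingType} (p : {poly R}) (Z : {poly {poly R}})
  : {poly {poly R}} := (map_poly (@cst2 R) p).[Z].

Definition lift2 {R : idomainType} (u : {poly {poly R}}) : {poly {poly {fraction R}}} :=
  map_poly (map_poly (@FracField.tofrac R)) u.

Definition inRb {R : idomainType} (b : R) (k : {fraction R}) : Prop :=
  exists (r : R) (n : nat),
    k = FracField.tofrac r / (FracField.tofrac b) ^+ n.

Definition theta_star {R : nzRingType} (p : nat) (th : {poly R}) : {poly R} :=
  \poly_(i < size th) th`_(p * i).

(* Write F = G(f).  The substitution chi : w |-> w(f, y) conjugates phi to the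
   translation sigma : y |-> y + a G(x); it is invertible after clearing a power
   of a, so a^N u = chi v with v in R[x,y] sigma-invariant.  As char R = p and
   a G(x) != 0, the sigma-invariants of R[x][y] are the polynomials in
   y^p - (a G(x))^(p-1) y, which chi maps to q; with f = d q1 + theta*(q) this
   gives a^N u = H(q1, q) for some H in R[x,y].  In a^N = d^N b^N the factor b^N
   is a unit of R_b, and the factors d are divided out of H one at a time:
   since d | theta' forces d | theta_i whenever p does not divide i, modulo d
   we have q1 = b x + g(y) and q = y^p, and H |-> H(b x + g(y), y^p) is
   injective modulo d once b is inverted.  Conversely f and aF are
   phi-invariant, hence so are q and q1. *)

From HB Require Import structures.
From mathcomp Require Import all_boot all_order all_algebra.
From mathcomp Require Import ring boolp.
Import GRing.Theory.
Set Implicit Arguments. Unset Strict Implicit. Unset Printing Implicit Defensive.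
Local Open Scope ring_scope.

Section Substitution.
Variable T : comNzRingType.
Implicit Types (u v X Y Z : {poly {poly T}}) (P : {poly T}) (r : T).

HB.instance Definition _ := GRing.RMorphism.copy (@cst2 T) (polyC \o polyC).

Definition evalP_at Z P := evalP P Z.
HB.instance Definition _ Z :=
  GRing.RMorphism.copy (evalP_at Z) (horner_eval Z \o map_poly (@cst2 T)).

Definition eval2_at X Y u := eval2 u X Y.
HB.instance Definition _ X Y :=
  GRing.RMorphism.copy (eval2_at X Y) (horner_eval Y \o map_poly (evalP_at X)).

Lemma evalP0 Z : evalP 0 Z = 0.
Proof. exact: (rmorph0 (evalP_at Z)). Qed.
Lemma evalPD P Q Z : evalP (P + Q) Z = evalP P Z + evalP Q Z.
Proof. exact: (rmorphD (evalP_at Z)). Qed.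
Lemma evalPM P Q Z : evalP (P * Q) Z = evalP P Z * evalP Q Z.
Proof. exact: (rmorphM (evalP_at Z)). Qed.
Lemma evalPXn P n Z : evalP (P ^+ n) Z = evalP P Z ^+ n.
Proof. exact: (rmorphXn (evalP_at Z)). Qed.
Lemma evalPC r Z : evalP r%:P Z = cst2 r.
Proof. by rewrite /evalP map_polyC hornerC. Qed.
Lemma evalPX Z : evalP 'X Z = Z.
Proof. by rewrite /evalP map_polyX hornerX. Qed.
Lemma evalPZ r P Z : evalP (r *: P) Z = cst2 r * evalP P Z.
Proof. by rewrite -mul_polyC evalPM evalPC. Qed.

Lemma eval2E u X Y : eval2 u X Y = (map_poly (evalP_at X) u).[Y].
Proof. by []. Qed.

Lemma eval2_0 X Y : eval2 0 X Y = 0.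
Proof. exact: (rmorph0 (eval2_at X Y)). Qed.
Lemma eval2D u v X Y : eval2 (u + v) X Y = eval2 u X Y + eval2 v X Y.
Proof. exact: (rmorphD (eval2_at X Y)). Qed.
Lemma eval2B u v X Y : eval2 (u - v) X Y = eval2 u X Y - eval2 v X Y.
Proof. exact: (rmorphB (eval2_at X Y)). Qed.
Lemma eval2M u v X Y : eval2 (u * v) X Y = eval2 u X Y * eval2 v X Y.
Proof. exact: (rmorphM (eval2_at X Y)). Qed.
Lemma eval2Xn u n X Y : eval2 (u ^+ n) X Y = eval2 u X Y ^+ n.
Proof. exact: (rmorphXn (eval2_at X Y)). Qed.
Lemma eval2C P X Y : eval2 P%:P X Y = evalP P X.
Proof. by rewrite eval2E map_polyC hornerC. Qed.
Lemma eval2_cst r X Y : eval2 (cst2 r) X Y = cst2 r.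
Proof. by rewrite eval2C evalPC. Qed.
Lemma eval2_varx X Y : eval2 varx X Y = X.
Proof. by rewrite eval2C evalPX. Qed.
Lemma eval2_vary X Y : eval2 vary X Y = Y.
Proof. by rewrite eval2E map_polyX hornerX. Qed.

Lemma coef_cst2M r u i j : (cst2 r * u)`_i`_j = r * u`_i`_j.
Proof. by rewrite /cst2 !coefCM. Qed.

Lemma poly2_ind (Pr : {poly {poly T}} -> Prop) :
  (forall r, Pr (cst2 r)) -> Pr varx -> Pr vary ->
  (forall u v, Pr u -> Pr v -> Pr (u + v)) ->
  (forall u v, Pr u -> Pr v -> Pr (u * v)) -> forall u, Pr u.
Proof.
move=> Pc Px Py PD PM.
have PC P : Pr P%:P.
  elim/poly_ind: P => [|P r IH]; first by have := Pc 0; rewrite rmorph0.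
  by rewrite polyCD polyCM; apply: PD (Pc r); apply: PM.
elim/poly_ind=> [|u P IH]; first by have := Pc 0; rewrite rmorph0.
by apply: PD (PC P); apply: PM.
Qed.

Lemma eval2_comp u X1 Y1 X2 Y2 :
  eval2 (eval2 u X1 Y1) X2 Y2 = eval2 u (eval2 X1 X2 Y2) (eval2 Y1 X2 Y2).
Proof.
elim/poly2_ind: u => [r|||u v IHu IHv|u v IHu IHv].
- by rewrite !eval2_cst.
- by rewrite !eval2_varx.
- by rewrite !eval2_vary.
- by rewrite !eval2D IHu IHv.
- by rewrite !eval2M IHu IHv.
Qed.

Lemma eval2_id u : eval2 u varx vary = u.
Proof.
elim/poly2_ind: u => [r|||u v IHu IHv|u v IHu IHv].
- by rewrite eval2_cst.
- by rewrite eval2_varx.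
- by rewrite eval2_vary.
- by rewrite eval2D IHu IHv.
- by rewrite eval2M IHu IHv.
Qed.

Lemma evalP_eval2 P Z X Y : eval2 (evalP P Z) X Y = evalP P (eval2 Z X Y).
Proof.
rewrite -[LHS]/(eval2_at X Y _) /evalP -horner_map -map_poly_comp.
by congr (_.[_]); apply: eq_map_poly => r /=; rewrite /eval2_at eval2_cst.
Qed.

Lemma evalP_comp P Q Z : evalP (P \Po Q) Z = evalP P (evalP Q Z).
Proof. by rewrite /evalP map_comp_poly horner_comp. Qed.

Lemma evalP_vary P : evalP P vary = map_poly polyC P.
Proof.
elim/poly_ind: P => [|P r IH]; first by rewrite evalP0 rmorph0.
by rewrite evalPD evalPM evalPX evalPC IH rmorphD rmorphM /= map_polyX map_polyC.
Qed.

Lemma eval2_polyC P X Y : eval2 (map_poly polyC P) X Y = evalP P Y.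
Proof. by rewrite -evalP_vary evalP_eval2 eval2_vary. Qed.

Lemma evalP_varx P : evalP P varx = P%:P.
Proof.
elim/poly_ind: P => [|P r IH]; first by rewrite evalP0.
by rewrite evalPD evalPM evalPX evalPC IH polyCD polyCM.
Qed.

Lemma eval2_varx_comp u Y : eval2 u varx Y = u \Po Y.
Proof.
rewrite eval2E /comp_poly; congr (_.[Y]).
by apply: eq_map_poly => P; rewrite /evalP_at evalP_varx.
Qed.

Lemma evalP_sub_factor P A B : exists D, evalP P A - evalP P B = (A - B) * D.
Proof.
set P2 := map_poly (@cst2 T) P.
have /factor_theorem [D DE] : root (P2 - P2.[B]%:P) B by rewrite /root !hornerE subrr.
exists D.[A]; have := congr1 (horner^~ A) DE.
by rewrite /= !hornerE mulrC => <-.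
Qed.

End Substitution.

Lemma cst2VK (F : fieldType) (k : F) (u : {poly {poly F}}) :
  k != 0 -> cst2 k^-1 * (cst2 k * u) = u.
Proof. by move=> k_neq0; rewrite mulrA -rmorphM mulVf // rmorph1 mul1r. Qed.

Section Lift.
Variable R : idomainType.
Local Notation tof := (@FracField.tofrac R).
Implicit Types (u X Y Z : {poly {poly R}}) (P : {poly R}) (r : R).

HB.instance Definition _ :=
  GRing.RMorphism.copy (@lift2 R) (map_poly (map_poly tof)).

Lemma lift2B u v : lift2 (u - v) = lift2 u - lift2 v.
Proof. exact: rmorphB. Qed.

Lemma lift2_cst r : lift2 (cst2 r) = cst2 (tof r).
Proof. by rewrite /lift2 /cst2 map_polyC /= map_polyC. Qed.
Lemma lift2_varx : lift2 (varx : {poly {poly R}}) = varx.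
Proof. by rewrite /lift2 /varx map_polyC /= map_polyX. Qed.
Lemma lift2_vary : lift2 (vary : {poly {poly R}}) = vary.
Proof. by rewrite /lift2 /vary map_polyX. Qed.

Lemma coef_lift2 u i j : (lift2 u)`_i`_j = tof u`_i`_j.
Proof. by rewrite /lift2 !coef_map. Qed.

Lemma lift2_inj : injective (@lift2 R).
Proof.
move=> u v /polyP huv; apply/polyP => i; apply/polyP => j; apply/eqP.
by rewrite -tofrac_eq -!coef_lift2 huv.
Qed.

Lemma lift2_evalP P Z : lift2 (evalP P Z) = evalP (map_poly tof P) (lift2 Z).
Proof.
rewrite /evalP -horner_map -!map_poly_comp.
by congr (_.[_]); apply: eq_map_poly => r /=; rewrite lift2_cst.
Qed.

Lemma lift2_eval2 u X Y : lift2 (eval2 u X Y) = eval2 (lift2 u) (lift2 X) (lift2 Y).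
Proof.
elim/poly2_ind: u => [r|||u v IHu IHv|u v IHu IHv].
- by rewrite eval2_cst lift2_cst eval2_cst.
- by rewrite eval2_varx lift2_varx eval2_varx.
- by rewrite eval2_vary lift2_vary eval2_vary.
- by rewrite eval2D !rmorphD /= IHu IHv eval2D.
- by rewrite eval2M !rmorphM /= IHu IHv eval2M.
Qed.

Lemma lift2_polyC P : lift2 (map_poly polyC P) = map_poly polyC (map_poly tof P).
Proof. by rewrite -!evalP_vary lift2_evalP lift2_vary. Qed.

(* Stated for abstract exponents: rewriting under [vary ^+ pp.+2] would let
   unification unfold the power. *)
Lemma lift2_AS n m X :
  lift2 (vary ^+ n - X ^+ m * vary) = vary ^+ n - lift2 X ^+ m * vary.
Proof. by rewrite rmorphB rmorphM !rmorphXn /= lift2_vary. Qed.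

Lemma lift2_XnD_cstM n r u :
  lift2 (vary ^+ n + cst2 r * u) = vary ^+ n + cst2 (tof r) * lift2 u.
Proof. by rewrite rmorphD rmorphM rmorphXn /= lift2_vary lift2_cst. Qed.

End Lift.

Lemma polyOverMXaddC (T : nzRingType) (S : addrClosed T) (P : {poly T}) c :
  (P * 'X + c%:P \is a polyOver S) = (P \is a polyOver S) && (c \in S).
Proof.
apply/polyOverP/andP => [SPc | [/polyOverP SP Sc] [|i]];
  rewrite ?coefD ?coefMX ?coefC /= ?add0r ?addr0 //.
split; last by have := SPc 0%N; rewrite coefD coefMX coefC /= add0r.
by apply/polyOverP => i; have := SPc i.+1; rewrite coefD coefMX coefC /= addr0.
Qed.

Section PolyOver2.
Variables (T : comNzRingType) (S : subringClosed T).
Local Notation PP := (polyOver (polyOver_pred S)).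
Implicit Types (u v X Y : {poly {poly T}}).

Lemma cst2_in r : (cst2 r \is a PP) = (r \in S).
Proof. by rewrite /cst2 !polyOverC. Qed.
Lemma varx_in : (varx : {poly {poly T}}) \is a PP.
Proof. by rewrite /varx polyOverC polyOverX. Qed.
Lemma vary_in : (vary : {poly {poly T}}) \is a PP.
Proof. exact: polyOverX. Qed.

Lemma polyOver2_ind (Pr : {poly {poly T}} -> Prop) :
  (forall r, r \in S -> Pr (cst2 r)) -> Pr varx -> Pr vary ->
  {in PP &, forall u v, Pr u -> Pr v -> Pr (u + v)} ->
  {in PP &, forall u v, Pr u -> Pr v -> Pr (u * v)} -> {in PP, forall u, Pr u}.
Proof.
move=> Pc Px Py PD PM.
have Pr0 : Pr 0 by have := Pc 0 (rpred0 S); rewrite rmorph0.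
have PC P : P \is a polyOver S -> Pr P%:P.
  elim/poly_ind: P => [_|P r IH]; first by rewrite rmorph0.
  rewrite polyOverMXaddC => /andP [SP Sr].
  have SPx : P%:P * varx \is a PP by apply: rpredM; [rewrite polyOverC | exact: varx_in].
  rewrite polyCD polyCM; apply: (PD _ _ SPx _ _ (Pc r Sr)); rewrite ?cst2_in //.
  by apply: (PM _ _ _ varx_in (IH SP) Px); rewrite polyOverC.
elim/poly_ind=> [//|u P IH]; rewrite polyOverMXaddC => /andP [Su SP].
have Suy : u * vary \is a PP by apply: rpredM; rewrite ?vary_in.
apply: (PD _ _ Suy _ _ (PC P SP)); first by rewrite polyOverC.
exact: (PM _ _ Su vary_in (IH Su) Py).
Qed.

Lemma eval2_in u X Y : u \is a PP -> X \is a PP -> Y \is a PP -> eval2 u X Y \is a PP.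
Proof.
move=> + SX SY; move: u; apply: polyOver2_ind => [r Sr|||u v _ _|u v _ _].
- by rewrite eval2_cst cst2_in.
- by rewrite eval2_varx.
- by rewrite eval2_vary.
- by rewrite eval2D; apply: rpredD.
- by rewrite eval2M; apply: rpredM.
Qed.

Lemma eval2_congr (c : {poly {poly T}}) u X1 Y1 X2 Y2 r s :
  u \is a PP -> X1 \is a PP -> Y1 \is a PP -> X2 \is a PP -> Y2 \is a PP ->
  r \is a PP -> s \is a PP -> X1 = X2 + c * r -> Y1 = Y2 + c * s ->
  exists2 w, w \is a PP & eval2 u X1 Y1 = eval2 u X2 Y2 + c * w.
Proof.
move=> Su SX1 SY1 SX2 SY2 Sr Ss eX eY.
move: u Su; apply: polyOver2_ind => [r' _|||u v Su Sv [w1 Sw1 e1] [w2 Sw2 e2]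
                                     |u v Su Sv [w1 Sw1 e1] [w2 Sw2 e2]].
- by exists 0; rewrite ?rpred0 // !eval2_cst mulr0 addr0.
- by exists r; rewrite // !eval2_varx.
- by exists s; rewrite // !eval2_vary.
- exists (w1 + w2); first exact: rpredD.
  by rewrite !eval2D e1 e2 mulrDr addrACA.
- exists (w1 * eval2 v X1 Y1 + eval2 u X2 Y2 * w2).
    by rewrite rpredD // rpredM // eval2_in.
  by rewrite !eval2M e1 e2; ring.
Qed.

End PolyOver2.

Section Localization.
Variables (R : idomainType) (b : R).
Local Notation tof := (@FracField.tofrac R).

(* The ring R_b.  Unlike [inRb b] this is a subring also for b = 0; the two
   agree when b != 0 (Rb_inRb). *)
Definition Rb : {pred {fraction R}} :=
  fun k => `[< exists r n, tof (b ^+ n) * k = tof r >].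

Lemma Rb_subring : subring_closed Rb.
Proof.
split.
- by apply/asboolP; exists 1, 0%N; rewrite expr0 mulr1.
- move=> x y /asboolP [r [n rE]] /asboolP [s [m sE]]; apply/asboolP.
  exists (b ^+ m * r - b ^+ n * s), (n + m)%N.
  by rewrite exprD !rmorphB !rmorphM /= -rE -sE; ring.
- move=> x y /asboolP [r [n rE]] /asboolP [s [m sE]]; apply/asboolP.
  by exists (r * s), (n + m)%N; rewrite exprD !rmorphM /= -rE -sE; ring.
Qed.

HB.instance Definition _ := GRing.isSubringClosed.Build _ Rb Rb_subring.

Lemma Rb_tofrac r : tof r \in Rb.
Proof. by apply/asboolP; exists r, 0%N; rewrite expr0 rmorph1 mul1r. Qed.

Lemma lift2_Rb u : lift2 u \is a polyOver (polyOver_pred Rb).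
Proof.
by apply/polyOverP => i; apply/polyOverP => j; rewrite coef_lift2 Rb_tofrac.
Qed.

Hypothesis b_neq0 : b != 0.

Lemma Rb_invb : (tof b)^-1 \in Rb.
Proof. by apply/asboolP; exists 1, 1%N; rewrite expr1 divff ?rmorph1 // tofrac_eq0. Qed.

Lemma Rb_inRb k : k \in Rb -> inRb b k.
Proof.
move=> /asboolP [r [n rE]]; exists r, n.
by rewrite -rE rmorphXn [_ * k]mulrC mulfK // expf_neq0 // tofrac_eq0.
Qed.

End Localization.

Section ArtinSchreier.
Variables (D : idomainType) (p : nat) (c : D).
Hypotheses (hp : p \in [pchar D]) (c_neq0 : c != 0).
Local Notation AS := ('X^p - (c ^+ p.-1)%:P * 'X : {poly D}).
Local Notation shift := ('X + c%:P : {poly D}).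

Let p_gt1 : (1 < p)%N := prime_gt1 (pcharf_prime hp).

Let size_AS_tail : (size (- ((c ^+ p.-1)%:P * 'X)) < size ('X^p : {poly D}))%N.
Proof.
rewrite size_polyXn size_polyN (leq_ltn_trans (size_polyMleq _ _)) //.
by rewrite size_polyX size_polyC; case: (_ != 0); rewrite /= ltnS // ltnW.
Qed.

Lemma size_AS : size AS = p.+1.
Proof. by rewrite size_polyDl // size_polyXn. Qed.

Lemma AS_monic : AS \is monic.
Proof. by rewrite monicE lead_coefDl // lead_coefXn. Qed.

Lemma AS_shift : AS \Po shift = AS.
Proof.
have hpP : p \in [pchar {poly D}] by rewrite pchar_poly.
rewrite comp_polyB comp_polyM comp_polyC comp_polyX rmorphXn /= comp_polyX.
rewrite exprDn_pchar; last by rewrite pnatE ?(pcharf_prime hp).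
rewrite -rmorphXn mulrDr -polyCM -exprSr prednK ?(ltnW p_gt1) //.
by rewrite opprD addrACA subrr addr0.
Qed.

Lemma shift_fixed_const (r : {poly D}) :
  (size r <= p)%N -> r \Po shift = r -> r = r.[0]%:P.
Proof.
move=> size_r r_fixed.
have r_mulc i : r.[i%:R * c] = r.[0].
  elim: i => [|i IH]; first by rewrite mul0r.
  by rewrite -IH -{2}r_fixed horner_comp !hornerE mulrSr mulrDl mul1r.
have mulc_inj : {in gtn p &, injective (fun i => i%:R * c)}.
  move=> i j /[!inE] ilt jlt /(mulIf c_neq0) eij; apply/eqP.
  wlog le_ij : i j ilt jlt eij / (i <= j)%N.
    by move=> H; case: (leqP i j) => [|/ltnW] h; [apply: H | rewrite eq_sym H].
  have p_dvd : (p %| j - i)%N by rewrite (dvdn_pcharf hp) natrB // eij subrr.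
  have := modn_small (leq_ltn_trans (leq_subr i j) jlt).
  by rewrite (eqP p_dvd) eqn_leq le_ij => /esym/eqP; rewrite subn_eq0.
apply/eqP; rewrite -subr_eq0; apply/negPn/negP => r_nconst.
have := max_poly_roots r_nconst (rs := [seq i%:R * c | i <- iota 0 p]).
rewrite size_map size_iota map_inj_in_uniq ?iota_uniq; last first.
  by move=> i j; rewrite !mem_iota !add0n; apply: mulc_inj.
have -> : all (root (r - r.[0]%:P)) [seq i%:R * c | i <- iota 0 p].
  by apply/allP => _ /mapP [i _ ->]; rewrite /root !hornerE r_mulc subrr.
move=> /(_ isT isT); apply/negP; rewrite -leqNgt.
apply: leq_trans (size_polyD _ _) _; rewrite geq_max size_r size_polyN size_polyC.
by case: (_ != 0); rewrite //= (ltnW p_gt1).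
Qed.

Lemma shift_fixed_comp_AS (w : {poly D}) :
  w \Po shift = w -> exists W : {poly D}, w = W \Po AS.
Proof.
elim: {w}(size w) {-2}w (leqnn (size w)) => [|n IH] w size_w w_fixed.
  by exists 0; move: size_w; rewrite leqn0 size_poly_eq0 comp_poly0 => /eqP.
have AS_neq0 : AS != 0 by rewrite -size_poly_eq0 size_AS.
have [qd qdE] : {qd | qd = Pdiv.Ring.rdivp w AS} by eexists.
have [r rE] : {r | r = Pdiv.Ring.rmodp w AS} by eexists.
have w_eq : w = qd * AS + r by rewrite qdE rE; apply: (Pdiv.RingMonic.rdivp_eq AS_monic).
have size_r : (size r < size AS)%N by rewrite rE; apply: Pdiv.Ring.ltn_rmodpN0.
have w_shift : w = (qd \Po shift) * AS + (r \Po shift).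
  by rewrite -{1}w_fixed {1}w_eq comp_polyD comp_polyM AS_shift.
have size_r_shift : (size (r \Po shift) < size AS)%N.
  by rewrite size_comp_poly2 ?size_XaddC.
have qd_fixed : qd \Po shift = qd.
  by rewrite [RHS]qdE [in RHS]w_shift (Pdiv.RingMonic.rdivp_addl_mul_small AS_monic).
have r_fixed : r \Po shift = r.
  by rewrite [RHS]rE [in RHS]w_shift (Pdiv.RingMonic.rmodp_addl_mul_small AS_monic).
have [W qd_comp] : exists W, qd = W \Po AS.
  have [->|qd_neq0] := eqVneq qd 0; first by exists 0; rewrite comp_poly0.
  apply: IH qd_fixed; rewrite -ltnS; apply: leq_trans size_w.
  have size_qdAS : size (qd * AS) = (size qd + p)%N by rewrite size_mul // size_AS addnS.
  rewrite w_eq size_polyDl; last first.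
    by rewrite size_qdAS; apply: leq_trans size_r _; rewrite size_AS -add1n leq_add2r size_poly_gt0.
  by rewrite size_qdAS -addn1 leq_add2l (ltnW p_gt1).
rewrite size_AS ltnS in size_r.
exists (W * 'X + r.[0]%:P).
by rewrite comp_polyD comp_polyM comp_polyX comp_polyC -qd_comp -shift_fixed_const.
Qed.

End ArtinSchreier.

Lemma polyZ_of_coef_dvd (T : comNzRingType) (P : {poly T}) (m : T) :
  (forall i, exists c, P`_i = m * c) -> exists g, P = m *: g.
Proof.
elim/poly_ind: P => [|P k IH] P_dvd; first by exists 0; rewrite scaler0.
have [c0 c0E] := P_dvd 0%N.
have [g gE] : exists g, P = m *: g.
  apply: IH => i; have [c cE] := P_dvd i.+1; exists c.
  by rewrite -cE coefD coefMX coefC /= addr0.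
exists (g * 'X + c0%:P).
rewrite scalerDr scalerAl -gE -mul_polyC -polyCM -c0E.
by rewrite coefD coefMX coefC /= add0r.
Qed.

Section ThetaStar.
Variables (R : comNzRingType) (p : nat) (d : R) (theta : {poly R}).
Hypotheses (hp : p \in [pchar R]) (d_dvd : dvdr d%:P theta^`()).

Lemma theta_coef_dvd i : ~~ (p %| i)%N -> exists c, theta`_i = d * c.
Proof.
case: i => [|i]; first by rewrite dvdn0.
move=> p_ndvd; have [C thetaE] := d_dvd.
have /eqP cop : coprime i.+1 p by rewrite coprime_sym prime_coprime ?(pcharf_prime hp).
case: (egcdnP p (ltn0Sn i)) => km kn; rewrite cop => kmE _.
have : (theta^`())`_i = (C * d%:P)`_i by rewrite thetaE.
rewrite coef_deriv coefMC => theta'E.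
exists (km%:R * C`_i).
have -> : theta`_i.+1 = theta`_i.+1 * (km * i.+1)%:R.
  by rewrite kmE natrD natrM (pcharf0 hp) mulr0 add0r mulr1.
by rewrite natrM mulrA mulrAC [theta`_i.+1 * _]mulr_natr theta'E; ring.
Qed.

Lemma theta_sub_theta_star : exists g, theta - (theta_star p theta \Po 'X^p) = d *: g.
Proof.
apply: polyZ_of_coef_dvd => i.
rewrite coefB coef_comp_poly_Xn ?(prime_gt0 (pcharf_prime hp)) //.
case: ifPn => [p_dvd|/theta_coef_dvd]; last by rewrite subr0.
exists 0; rewrite mulr0 /theta_star coef_poly mulnC divnK //.
case: ltnP => [_|size_le]; first by rewrite subrr.
by rewrite nth_default ?subrr // (leq_trans size_le (leq_div _ _)).
Qed.

End ThetaStar.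

Section FieldSubstitution.
Variables (F : fieldType) (a : F) (th : {poly F}).
Hypothesis a_neq0 : a != 0.
Local Notation f := (cst2 a * varx + map_poly polyC th).

Lemma eval2_f_inj V W : eval2 V f vary = eval2 W f vary -> V = W.
Proof.
set g := cst2 a^-1 * (varx - map_poly polyC th).
have fg : eval2 f g vary = varx.
  rewrite eval2D eval2M eval2_cst eval2_varx eval2_polyC evalP_vary /g.
  by rewrite mulrA -rmorphM divff // rmorph1 mul1r subrK.
move=> /(congr1 (fun Z => eval2 Z g vary)).
by rewrite /= !eval2_comp fg eval2_vary !eval2_id.
Qed.

Lemma eval2_f_phi aF :
  eval2 f (varx + cst2 a^-1 * (evalP th vary - evalP th (vary + aF))) (vary + aF) = f.
Proof.
rewrite eval2D eval2M eval2_cst eval2_varx eval2_polyC evalP_vary.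
by rewrite mulrDr mulrA -rmorphM divff // rmorph1 mul1r -addrA subrK.
Qed.

End FieldSubstitution.

Lemma eval2_AS_translate (T : comNzRingType) p (X aF : {poly {poly T}}) :
  p \in [pchar T] -> eval2 aF X (vary + aF) = aF ->
  eval2 (vary ^+ p - aF ^+ p.-1 * vary) X (vary + aF) = vary ^+ p - aF ^+ p.-1 * vary.
Proof.
move=> hp aF_fixed.
have hp2 : p \in [pchar {poly {poly T}}] by rewrite !pchar_poly.
rewrite eval2B eval2M !eval2Xn aF_fixed eval2_vary.
rewrite exprDn_pchar; last by rewrite pnatE ?(pcharf_prime hp2).
rewrite mulrDr -exprSr prednK ?prime_gt0 ?(pcharf_prime hp) //.
by rewrite opprD addrACA subrr addr0.
Qed.

Section Descent.
Variables (F : fieldType) (S : subringClosed F) (p : nat) (b d : F).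
Local Notation PP := (polyOver (polyOver_pred S)).
Hypotheses (p_gt0 : (0 < p)%N) (bS : b \in S) (bVS : b^-1 \in S) (dS : d \in S).
Hypotheses (b_neq0 : b != 0) (d_neq0 : d != 0).
Variables (q1 q r1 r2 : {poly {poly F}}).
Hypotheses (q1S : q1 \is a PP) (qS : q \is a PP) (r1S : r1 \is a PP) (r2S : r2 \is a PP).
Hypotheses (q1E : q1 = cst2 b * varx + eval2 q1 0 vary + cst2 d * r1)
           (qE : q = vary ^+ p + cst2 d * r2).

(* The substitution x := b^-1 (x - g(y)) maps H(b x + g(y), y^p), which is
   H(q1, q) modulo d, to H(x, y^p), whose coefficients are those of H. *)
Lemma descent_step H w : H \is a PP -> w \is a PP ->
  eval2 H q1 q = cst2 d * w -> cst2 d^-1 * H \is a PP.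
Proof.
move=> HS wS Hw.
set g := eval2 q1 0 vary; set A := cst2 b * varx + g.
have gS : g \is a PP by rewrite eval2_in ?rpred0 ?vary_in.
have A_in : A \is a PP by rewrite rpredD ?rpredM ?cst2_in ?varx_in.
have ypS : vary ^+ p \is a PP by apply: rpredX; apply: vary_in.
have [w' w'S HAw'] := eval2_congr HS q1S qS A_in ypS r1S r2S q1E qE.
have HAw : eval2 H A (vary ^+ p) = cst2 d * (w - w') by rewrite mulrBr -Hw HAw' addrK.
set tx := cst2 b^-1 * (varx - g).
have gx : eval2 g tx vary = g by rewrite eval2_comp eval2_0 eval2_vary.
have Ax : eval2 A tx vary = varx.
  by rewrite eval2D eval2M eval2_cst eval2_varx gx mulrA -rmorphM divff // rmorph1 mul1r subrK.
have := congr1 (fun Z => eval2 Z tx vary) HAw.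
rewrite /= eval2_comp Ax eval2Xn eval2_vary eval2M eval2_cst eval2_varx_comp.
set z := eval2 (w - w') tx vary => HzE.
have zS : z \is a PP by rewrite eval2_in ?rpredB ?rpredM ?cst2_in ?rpredB ?varx_in ?vary_in.
apply/polyOverP => j; apply/polyOverP => i; rewrite coef_cst2M.
have := congr1 (fun P : {poly {poly F}} => P`_(p * j)`_i) HzE.
rewrite /= coef_comp_poly_Xn // dvdn_mulr // mulKn // coef_cst2M => ->.
by rewrite mulrA mulVf // mul1r (polyOverP (polyOverP zS _)).
Qed.

Lemma descent n H w : H \is a PP -> w \is a PP ->
  eval2 H q1 q = cst2 (d ^+ n) * w -> cst2 (d ^+ n)^-1 * H \is a PP.
Proof.
elim: n H => [|n IH] H HS wS Hw; first by rewrite expr0 invr1 rmorph1 mul1r.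
have dnwS : cst2 (d ^+ n) * w \is a PP by rewrite rpredM ?cst2_in ?rpredX.
have Hw' : eval2 H q1 q = cst2 d * (cst2 (d ^+ n) * w) by rewrite Hw exprS rmorphM mulrA.
have dVHS := descent_step HS dnwS Hw'.
have dVHw : eval2 (cst2 d^-1 * H) q1 q = cst2 (d ^+ n) * w.
  by rewrite eval2M eval2_cst Hw' cst2VK.
by have := IH _ dVHS wS dVHw; rewrite mulrA -rmorphM -invfM -exprSr.
Qed.

End Descent.

Section Theorem6p4.
Variables (R : idomainType) (pp : nat).
Local Notation p := pp.+2.
Hypothesis hp : p \in [pchar R].
Variables (a d b : R) (theta G : {poly R}).
Hypotheses (a_neq0 : a != 0) (G_neq0 : G != 0) (ab : a = d * b).
Hypothesis d_dvd : dvdr d%:P theta^`().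

Local Notation f := (cst2 a * varx + map_poly polyC theta).
Local Notation F := (evalP G f).
Local Notation q := (vary ^+ p - (cst2 a * F) ^+ p.-1 * vary).
Local Notation ts := (theta_star p theta).

Let d_neq0 : d != 0.
Proof. by apply: contraNneq a_neq0; rewrite ab => ->; rewrite mul0r. Qed.
Let b_neq0 : b != 0.
Proof. by apply: contraNneq a_neq0; rewrite ab => ->; rewrite mulr0. Qed.

Lemma yp_sub_q : vary ^+ p - q = cst2 d * (cst2 b * cst2 a ^+ pp * F ^+ pp.+1 * vary).
Proof. by rewrite opprB addrC subrK exprMn ab rmorphM /= !exprS; ring. Qed.

Lemma dvd_f_sub_theta_star_q : exists q1R, f - evalP ts q = cst2 d * q1R.
Proof.
have [g gE] := theta_sub_theta_star hp d_dvd.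
have thetaE : map_poly polyC theta = evalP ts (vary ^+ p) + cst2 d * evalP g vary.
  have -> : evalP ts (vary ^+ p) = evalP (ts \Po 'X^p) vary.
    by rewrite evalP_comp evalPXn evalPX.
  by rewrite -evalPZ -gE -evalPD addrC subrK evalP_vary.
have [D DE] := evalP_sub_factor ts (vary ^+ p) q.
rewrite yp_sub_q in DE.
have tsE : evalP ts (vary ^+ p) = evalP ts q + cst2 d * (cst2 b * cst2 a ^+ pp * F ^+ pp.+1 * vary) * D.
  by rewrite -DE addrC subrK.
exists (cst2 b * varx + evalP g vary + cst2 b * cst2 a ^+ pp * F ^+ pp.+1 * vary * D).
rewrite {1}thetaE tsE; move: (evalP ts q) (evalP g vary) (F ^+ pp.+1) => T0 Tg TF.
by rewrite ab rmorphM /=; ring.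
Qed.

Lemma q_sub_q0 : exists E, q - eval2 q 0 vary = cst2 a ^+ p * varx * E.
Proof.
set F0 := eval2 F 0 vary.
have f0 : eval2 f 0 vary = map_poly polyC theta.
  by rewrite eval2D eval2M eval2_varx mulr0 add0r eval2_polyC evalP_vary.
have q0E : eval2 q 0 vary = vary ^+ p - (cst2 a * F0) ^+ p.-1 * vary.
  by rewrite eval2B !eval2Xn eval2M eval2Xn eval2M eval2_cst eval2_vary.
have [D3 FD3] : exists D3, F - F0 = cst2 a * varx * D3.
  have [D DE] := evalP_sub_factor G f (eval2 f 0 vary).
  by exists D; rewrite /F0 evalP_eval2 DE f0 addrK.
have [D2 FD2] : exists D2, F ^+ pp.+1 - F0 ^+ pp.+1 = (F - F0) * D2.
  by eexists; apply: subrXX.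
have FE : F ^+ pp.+1 = F0 ^+ pp.+1 + cst2 a * varx * D3 * D2.
  by rewrite -FD3 -FD2 [RHS]addrC subrK.
exists (- (D3 * D2 * vary)).
by rewrite q0E !exprMn FE !exprS; ring.
Qed.

Lemma q1R_decomp q1R : f - evalP ts q = cst2 d * q1R ->
  exists r1, q1R = cst2 b * varx + eval2 q1R 0 vary + cst2 d * r1.
Proof.
move=> q1RE.
have [E qE] := q_sub_q0.
have [D1 D1E] := evalP_sub_factor ts q (eval2 q 0 vary).
have q1R0E : cst2 d * eval2 q1R 0 vary = map_poly polyC theta - evalP ts (eval2 q 0 vary).
  rewrite -(eval2_cst d 0 vary) -eval2M -q1RE eval2B evalP_eval2 eval2D eval2M.
  by rewrite eval2_varx mulr0 add0r eval2_polyC evalP_vary.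
exists (- (cst2 d ^+ pp * cst2 b ^+ p * varx * E * D1)).
have cd_neq0 : cst2 d != 0 by rewrite !polyC_eq0.
apply: (mulfI cd_neq0); rewrite mulrDr mulrDr q1R0E -q1RE.
rewrite -[evalP ts q](subrK (evalP ts (eval2 q 0 vary))) D1E qE.
move: (evalP ts _) => T0; rewrite ab rmorphM /= !exprMn !exprS; ring.
Qed.

Local Notation chi w := (eval2 w f vary).
Local Notation c := (cst2 a * evalP G varx).

Lemma chi_denominator w : exists N v, chi v = cst2 (a ^+ N) * w.
Proof.
elim/poly2_ind: w => [r|||u v [N1 [v1 v1E]] [N2 [v2 v2E]]|u v [N1 [v1 v1E]] [N2 [v2 v2E]]].
- by exists 0%N, (cst2 r); rewrite eval2_cst expr0 rmorph1 mul1r.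
- exists 1%N, (varx - map_poly polyC theta).
  by rewrite eval2B eval2_varx eval2_polyC evalP_vary expr1 addrK.
- by exists 0%N, vary; rewrite eval2_vary expr0 rmorph1 mul1r.
- exists (N1 + N2)%N, (cst2 (a ^+ N2) * v1 + cst2 (a ^+ N1) * v2).
  by rewrite eval2D !eval2M !eval2_cst v1E v2E exprD !rmorphM /=; ring.
- exists (N1 + N2)%N, (v1 * v2).
  by rewrite eval2M v1E v2E exprD !rmorphM /=; ring.
Qed.

Lemma chi_translate w : chi (eval2 w varx (vary + c)) = eval2 w f (vary + cst2 a * F).
Proof.
by rewrite eval2_comp eval2_varx eval2D eval2_vary eval2M eval2_cst evalP_eval2 eval2_varx.
Qed.

Lemma chi_AS W : chi (eval2 W varx (vary ^+ p - c ^+ p.-1 * vary)) = eval2 W f q.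
Proof.
rewrite eval2_comp eval2_varx eval2B !eval2Xn eval2M eval2Xn eval2M.
by rewrite eval2_cst evalP_eval2 eval2_varx eval2_vary.
Qed.

Lemma translate_fixed_AS v :
  eval2 v varx (vary + c) = v -> exists W, v = eval2 W varx (vary ^+ p - c ^+ p.-1 * vary).
Proof.
have hpR : p \in [pchar {poly R}] by rewrite pchar_poly.
have aG_neq0 : a%:P * G != 0 by rewrite mulf_neq0 ?polyC_eq0.
rewrite evalP_varx -polyCM !eval2_varx_comp => /(shift_fixed_comp_AS hpR aG_neq0) [W ->].
by exists W; rewrite eval2_varx_comp rmorphXn.
Qed.

Local Notation tof := (@FracField.tofrac R).
Local Notation thK := (map_poly tof theta).
Local Notation aF := (lift2 (cst2 a * F)).
Local Notation phiy := (vary + aF).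
Local Notation phix := (varx + cst2 (tof a)^-1 * (evalP thK vary - evalP thK phiy)).

Let tofa_neq0 : tof a != 0. Proof. by rewrite tofrac_eq0. Qed.

Lemma lift2_f : lift2 f = cst2 (tof a) * varx + map_poly polyC thK.
Proof. by rewrite rmorphD rmorphM /= lift2_cst lift2_varx lift2_polyC. Qed.

Lemma chi_inj v w : chi v = chi w -> v = w.
Proof.
move=> /(congr1 (@lift2 R)); rewrite !lift2_eval2 lift2_vary lift2_f.
by move=> /(eval2_f_inj tofa_neq0) /lift2_inj.
Qed.

Lemma phi_f : eval2 (lift2 f) phix phiy = lift2 f.
Proof. by rewrite lift2_f eval2_f_phi. Qed.

Lemma phi_chi w : eval2 (lift2 (chi w)) phix phiy = lift2 (chi (eval2 w varx (vary + c))).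
Proof.
rewrite chi_translate !lift2_eval2 eval2_comp phi_f lift2_vary eval2_vary.
by rewrite [lift2 (vary + _)]rmorphD /= lift2_vary.
Qed.

Lemma translate_fixed u N v : eval2 (lift2 u) phix phiy = lift2 u ->
  chi v = cst2 (a ^+ N) * u -> eval2 v varx (vary + c) = v.
Proof.
move=> u_fixed vE; apply: chi_inj; apply: lift2_inj.
by rewrite -phi_chi vE rmorphM /= lift2_cst eval2M eval2_cst u_fixed.
Qed.

Lemma phi_fixed_repr u q1R : f - evalP ts q = cst2 d * q1R ->
  eval2 (lift2 u) phix phiy = lift2 u -> exists N H, cst2 (a ^+ N) * u = eval2 H q1R q.
Proof.
move=> q1RE u_fixed.
have [N [v vE]] := chi_denominator u.
have [W WE] := translate_fixed_AS (translate_fixed u_fixed vE).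
exists N, (eval2 W (cst2 d * varx + map_poly polyC ts) vary).
rewrite -vE WE chi_AS eval2_comp eval2D eval2M eval2_cst eval2_varx eval2_polyC.
by rewrite eval2_vary -q1RE subrK.
Qed.

Lemma phi_aF : eval2 aF phix phiy = aF.
Proof.
have aFE : aF = cst2 (tof a) * evalP (map_poly tof G) (lift2 f).
  by rewrite rmorphM /= lift2_cst lift2_evalP.
by rewrite {1}aFE eval2M eval2_cst evalP_eval2 phi_f -aFE.
Qed.

Lemma phi_q : eval2 (lift2 q) phix phiy = lift2 q.
Proof.
rewrite lift2_AS.
exact: (eval2_AS_translate (rmorph_pchar tof hp) phi_aF).
Qed.

Lemma lift2_q1R q1R : f - evalP ts q = cst2 d * q1R ->
  lift2 q1R = cst2 (tof d)^-1 * lift2 (f - evalP ts q).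
Proof. by move=> ->; rewrite rmorphM /= lift2_cst cst2VK // tofrac_eq0. Qed.

Lemma phi_q1 q1R : f - evalP ts q = cst2 d * q1R ->
  eval2 (lift2 q1R) phix phiy = lift2 q1R.
Proof.
move=> /lift2_q1R ->; rewrite lift2B lift2_evalP eval2M eval2_cst.
by rewrite eval2B evalP_eval2 phi_f phi_q.
Qed.

Lemma phi_fixed_Rb_repr u q1R : f - evalP ts q = cst2 d * q1R ->
  eval2 (lift2 u) phix phiy = lift2 u ->
  exists2 H, H \is a polyOver (polyOver_pred (Rb b)) & lift2 u = eval2 H (lift2 q1R) (lift2 q).
Proof.
move=> q1RE u_fixed.
have [N [H HE]] := phi_fixed_repr q1RE u_fixed.
have [r1 r1E] := q1R_decomp q1RE.
set r2 := - (cst2 b * cst2 a ^+ pp * F ^+ pp.+1 * vary).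
have q1KE : lift2 q1R = cst2 (tof b) * varx + eval2 (lift2 q1R) 0 vary + cst2 (tof d) * lift2 r1.
  by rewrite {1}r1E !rmorphD !rmorphM /= !lift2_cst lift2_varx lift2_eval2 lift2_vary rmorph0.
have qE : q = vary ^+ p + cst2 d * r2 by rewrite mulrN -yp_sub_q opprB [RHS]addrC subrK.
have qKE : lift2 q = vary ^+ p + cst2 (tof d) * lift2 r2 by rewrite {1}qE lift2_XnD_cstM.
have HKE : eval2 (lift2 H) (lift2 q1R) (lift2 q) =
    cst2 (tof d ^+ N) * (cst2 (tof b ^+ N) * lift2 u).
  by rewrite -lift2_eval2 -HE rmorphM /= lift2_cst ab exprMn !rmorphM !rmorphXn /= mulrA.
have [dK bK] : tof d != 0 /\ tof b != 0 by rewrite !tofrac_eq0.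
have bNuS : cst2 (tof b ^+ N) * lift2 u \is a polyOver (polyOver_pred (Rb b)).
  by rewrite rpredM ?cst2_in ?rpredX ?Rb_tofrac ?lift2_Rb.
have dNHS := descent (ltn0Sn pp.+1) (Rb_tofrac b b) (Rb_invb b_neq0) (Rb_tofrac b d) bK dK
  (lift2_Rb b q1R) (lift2_Rb b q) (lift2_Rb b r1) (lift2_Rb b r2) q1KE qKE
  (lift2_Rb b H) bNuS HKE.
exists (cst2 (tof b ^+ N)^-1 * (cst2 (tof d ^+ N)^-1 * lift2 H)).
  by rewrite rpredM ?cst2_in // -exprVn rpredX ?Rb_invb.
rewrite eval2M eval2_cst eval2M eval2_cst HKE.
have [dN0 bN0] := (expf_neq0 N dK, expf_neq0 N bK).
(* Rewriting with cst2VK here would make unification unfold inverses in K. *)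
exact: esym (etrans (congr1 (fun X => _ * X) (cst2VK _ dN0)) (cst2VK _ bN0)).
Qed.

End Theorem6p4.

Theorem theorem6p4 (R : idomainType) (hUFD : is_UFD R) (p : nat)
  (hp : p \in [pchar R])
  (a : R) (ha : a != 0)
  (theta : {poly R}) (htheta : theta != 0) (htheta0 : theta`_0 = 0)
  (F : {poly {poly R}}) (hF : F != 0)
  (hFf : exists G : {poly R},
      F = evalP G (cst2 a * varx + map_poly polyC theta))
  (d b : R)
  (hd : is_gcd (d%:P) (a%:P) (theta^`()))
  (hb : a = d * b) :
  let f : {poly {poly R}} := cst2 a * varx + map_poly polyC theta in
  let K := {fraction R} in
  let tof := @FracField.tofrac R in
  let aF : {poly {poly K}} := lift2 (cst2 a * F) in
  let thK : {poly K} := map_poly tof theta in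
  let phiy : {poly {poly K}} := vary + aF in
  let phix : {poly {poly K}} :=
    varx + cst2 (tof a)^-1 * (evalP thK vary - evalP thK phiy) in
  let q : {poly {poly R}} := vary ^+ p - (cst2 a * F) ^+ p.-1 * vary in
  let q1 : {poly {poly K}} :=
    cst2 (tof d)^-1 * lift2 (f - evalP (theta_star p theta) q) in
  forall u : {poly {poly R}},
    eval2 (lift2 u) phix phiy = lift2 u
    <->
    exists G : {poly {poly K}},
      (forall i j : nat, inRb b (G`_i`_j)) /\ lift2 u = eval2 G q1 (lift2 q).
Proof.
have := pcharf_prime hp; case: p hp => [|[|pp]] hp // _.
have [G FE] := hFf; subst F.
have G_neq0 : G != 0 by apply: contraNneq hF => ->; rewrite evalP0.
have b_neq0 : b != 0 by apply: contraNneq ha; rewrite hb => ->; rewrite mulr0.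
have [q1R q1RE] := dvd_f_sub_theta_star_q hp G hb hd.2.1.
move=> f K tof aF thK phiy phix q q1 u.
have -> : q1 = lift2 q1R by exact: esym (lift2_q1R ha hb q1RE).
split=> [u_fixed | [H [_ ->]]].
  have [H HS uE] := phi_fixed_Rb_repr hp ha G_neq0 hb q1RE u_fixed.
  exists H; split=> // i j.
  exact/(Rb_inRb b_neq0)/(polyOverP (polyOverP HS i)).
by rewrite eval2_comp (phi_q1 hp ha hb q1RE) (phi_q hp theta G ha).
Qed.
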